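(* Let $q$ be a prime number and $1\le i<q$ with $i/q\le1/2$. Then $\mathsf{L}^i_q$, with its signature expanded by the (term-definable) implication $\Rightarrow^i_q$, is a $(q+1)$-valued ideal paraconsistent logic (with respect to Łukasiewicz negation $\neg$ and the implication $\Rightarrow^i_q$).
   Context: $\mathbf{ŁV}_{q+1}=(\{0,\frac1q,\dots,1\},\neg,\to)$ with $\neg x=1-x$, $x\to y=\min\{1,1-x+y\}$, $x\vee y=\max\{x,y\}$ (definable as $(x\to y)\to y$). $F_{i/q}=\{x:x\ge i/q\}$ and $\mathsf{L}^i_q=\langle\mathbf{ŁV}_{q+1},F_{i/q}\rangle$ (matrix consequence). ${\sim}^i_q$ is a term-definable unary connective with ${\sim}^i_q x=0$ if $x\ge i/q$ and $1$ otherwise, and $\varphi\Rightarrow^i_q\psi:={\sim}^i_q\varphi\vee\psi$. A logic $L$ over a signature $\Theta$ with unary $\neg$ and binary $\to$ is an ideal paraconsistent logic if: (i) it is $\neg$-paraconsistent ($\varphi,\neg\varphi\nvdash_L\psi$ for some $\varphi,\psi$); (ii) $\to$ satisfies the deduction-detachment theorem ($\Gamma\cup\{\varphi\}\vdash_L\psi$ iff $\Gamma\vdash_L\varphi\to\psi$); (iii) there is a presentation $L'=\langle\mathbf{A},\{1\}\rangle$ of classical logic over $\Theta$ with universe $\{0,1\}$ where $\neg,\to$ are classical negation and implication; (iv) ${\vdash_L}\subseteq{\vdash_{L'}}$; and moreover $L$ is maximal w.r.t. $L'$ (proper sublogic such that adding any $L'$-theorem not provable in $L$, with all its substitution instances,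 yields $L'$) and every proper extension of $L$ over $\Theta$ is not $\neg$-paraconsistent. *)

From mathcomp Require Import all_boot.
Unset Printing Implicit Defensive.

Inductive form : Type :=
| Var  : nat -> form
| Neg  : form -> form
| LImp : form -> form -> form
| Imp  : form -> form -> form.

Fixpoint subst (s : nat -> form) (f : form) : form :=
  match f with
  | Var n => s n
  | Neg a => Neg (subst s a)
  | LImp a b => LImp (subst s a) (subst s b)
  | Imp a b => Imp (subst s a) (subst s b)
  end.

Definition fset := form -> Prop.
Definition cons := fset -> form -> Prop.

Definition set_empty : fset := fun _ => False.
Definition set_union (A B : fset) : fset := fun f => A f \/ B f.
Definition set_add (A : fset) (a : form) : fset := fun f => A f \/ f = a.
Definition set_pair (a b : form) : fset := fun f => f = a \/ f = b.
Definition set_image (s : nat -> form) (A : fset) : fset :=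
  fun f => exists g, A g /\ f = subst s g.
Definition instances (a : form) : fset := fun f => exists s, f = subst s a.

Fixpoint eval {T : Type} (ng : T -> T) (li im : T -> T -> T) (v : nat -> T)
  (f : form) : T :=
  match f with
  | Var n => v n
  | Neg a => ng (eval ng li im v a)
  | LImp a b => li (eval ng li im v a) (eval ng li im v b)
  | Imp a b => im (eval ng li im v a) (eval ng li im v b)
  end.

Definition matrix_cons {T : Type} (ng : T -> T) (li im : T -> T -> T)
  (D : T -> Prop) : cons :=
  fun G f => forall v : nat -> T,
    (forall g, G g -> D (eval ng li im v g)) -> D (eval ng li im v f).

(* LV_{q+1}: the value k : 'I_q.+1 represents k/q. *)
Definition luk_neg (q : nat) (x : 'I_q.+1) : 'I_q.+1 := inord (q - x).
Definition luk_imp (q : nat) (x y : 'I_q.+1) : 'I_q.+1 := inord (minn q (q - x + y)).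
(* ~^i_q x = 0 if x >= i/q, 1 otherwise; x =>^i_q y = max(~^i_q x, y). *)
Definition luk_tilde (q i : nat) (x : 'I_q.+1) : nat := if i <= x then 0 else q.
Definition luk_impi (q i : nat) (x y : 'I_q.+1) : 'I_q.+1 :=
  inord (maxn (luk_tilde q i x) y).
Definition luk_filter (q i : nat) (x : 'I_q.+1) : Prop := i <= x.

Definition Lqi (q i : nat) : cons :=
  matrix_cons (@luk_neg q) (@luk_imp q) (@luk_impi q i) (@luk_filter q i).

(* Two-valued presentation of classical logic over Theta: neg and the
   designated implication Imp are classical; LImp is interpreted by some
   boolean function li. *)
Definition classical_pres (li : bool -> bool -> bool) : cons :=
  matrix_cons negb li implb (fun b => b = true).

Definition is_logic (C : cons) : Prop :=
  (forall G f, G f -> C G f) /\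
  (forall G D f, (forall g, G g -> D g) -> C G f -> C D f) /\
  (forall G D f, (forall g, D g -> C G g) -> C (set_union G D) f -> C G f) /\
  (forall G f s, C G f -> C (set_image s G) (subst s f)).

Definition subrel (C C' : cons) : Prop := forall G f, C G f -> C' G f.

Definition neg_paraconsistent (C : cons) : Prop :=
  exists f g, ~ C (set_pair f (Neg f)) g.

Definition deduction_detachment (C : cons) : Prop :=
  forall G f g, C (set_add G f) g <-> C G (Imp f g).

Definition add_axiom (C : cons) (a : form) : cons :=
  fun G f => C (set_union G (instances a)) f.

Definition maximal_wrt (C C' : cons) : Prop :=
  subrel C C' /\ ~ subrel C' C /\
  forall a, C' set_empty a -> ~ C set_empty a ->
    forall G f, add_axiom C a G f <-> C' G f.

Definition ideal_paraconsistent (C : cons) : Prop :=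
  is_logic C /\
  neg_paraconsistent C /\
  deduction_detachment C /\
  (exists li : bool -> bool -> bool,
      subrel C (classical_pres li) /\ maximal_wrt C (classical_pres li)) /\
  (forall C'', is_logic C'' -> subrel C C'' -> ~ subrel C'' C ->
      ~ neg_paraconsistent C'').

From Pilot Require Import Defs.
From mathcomp Require Import all_boot zify.
From Stdlib Require Import Classical.

(** Because [q] is prime, every constant [c/q] is term-definable from any
    truth value [x] strictly between [0] and [1]: the subtractive Euclidean
    algorithm, run on the pair [(x, 1)] with the case distinctions expressed by
    Łukasiewicz terms, produces [gcd(x, 1) = 1/q], and its multiples give all
    constants.  Hence a valuation taking a non-classical value at some variable
    can simulate any other valuation by a substitution.  Two consequences:
    a valuation validating all instances of a non-theorem takes only the values
    [0] and [1], where the matrix is the two-element Boolean algebra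
    (maximality w.r.t. classical logic); and [p, ~p], which is designated
    exactly when [i/q <= p <= 1 - i/q], derives every substitution instance of
    every invalid inference, so a proper structural extension proves
    [p, ~p |- r] (no proper extension is paraconsistent).  Paraconsistency
    itself holds because [p = i/q <= 1/2] designates both [p] and [~p]. *)

Local Notation p_not_p := (set_pair (Var 0) (Neg (Var 0))).

Section Matrix.
Variables (T : Type) (ng : T -> T) (li im : T -> T -> T) (D : T -> Prop).

Local Notation ev := (eval ng li im).
Local Notation M := (matrix_cons ng li im D).

Lemma eval_subst v s f : ev v (subst s f) = ev (fun n => ev v (s n)) f.
Proof. by elim: f => //= [f ->|f1 -> f2 ->|f1 -> f2 ->]. Qed.

Lemma eval_ext v v' f : v =1 v' -> ev v f = ev v' f.
Proof. by move=> vv'; elim: f => //= [f ->|f1 -> f2 ->|f1 -> f2 ->]. Qed.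

Lemma matrix_cons_is_logic : is_logic M.
Proof.
split; [|split; [|split]].
- by move=> G f Gf v; apply.
- by move=> G G' f GG' MGf v vG'; apply: MGf => g /GG'; apply: vG'.
- move=> G G' f MG' MGG'f v vG; apply: MGG'f => g [/vG //|/MG'].
  by apply.
- move=> G f s MGf v vsG; rewrite eval_subst; apply: MGf => g Gg.
  by rewrite -eval_subst; apply: vsG; exists g.
Qed.

Lemma matrix_cons_countermodel G f :
  ~ M G f -> exists v, (forall g, G g -> D (ev v g)) /\ ~ D (ev v f).
Proof.
move=> nMGf; apply: NNPP => no_counter; apply: nMGf => v vG.
by apply: NNPP => nvf; apply: no_counter; exists v.
Qed.

Lemma matrix_cons_deduction_detachment :
  (forall x y, D (im x y) <-> (D x -> D y)) -> deduction_detachment M.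
Proof.
move=> Dim G f g; split => [MGfg v vG | MGfg v vGf] /=.
- by apply/Dim => vf; apply: MGfg => h [/vG|->].
- have /Dim := MGfg v (fun h Gh => vGf h (or_introl Gh)).
  by apply; apply: vGf; right.
Qed.

End Matrix.

Arguments eval_ext {T ng li im v v' f}.

Section Homomorphism.
Variables (T U : Type) (ngT : T -> T) (liT imT : T -> T -> T) (DT : T -> Prop).
Variables (ngU : U -> U) (liU imU : U -> U -> U) (DU : U -> Prop).
Variable h : T -> U.
Hypotheses (h_neg : {morph h : x / ngT x >-> ngU x})
           (h_limp : {morph h : x y / liT x y >-> liU x y})
           (h_imp : {morph h : x y / imT x y >-> imU x y})
           (h_designated : forall x, DU (h x) <-> DT x).

Lemma eval_hom v f : h (eval ngT liT imT v f) = eval ngU liU imU (h \o v) f.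
Proof. by elim: f => //= [f <-|f1 <- f2 <-|f1 <- f2 <-]. Qed.

Lemma designated_hom v f :
  DU (eval ngU liU imU (h \o v) f) <-> DT (eval ngT liT imT v f).
Proof. by rewrite -eval_hom. Qed.

Lemma matrix_cons_hom :
  Defs.subrel (matrix_cons ngU liU imU DU) (matrix_cons ngT liT imT DT).
Proof.
move=> G f MUGf v vG; apply/designated_hom; apply: MUGf => g Gg.
exact/designated_hom/vG.
Qed.

End Homomorphism.

Lemma add_axiom_theorem_subrel {C C' : cons} {a} :
  is_logic C' -> Defs.subrel C C' -> C' set_empty a -> Defs.subrel (add_axiom C a) C'.
Proof.
move=> [_ [C'mon [C'cut C'str]]] CC' C'a G f /CC' C'Gaf.
apply: C'cut C'Gaf => _ [s ->].
apply: C'mon (C'str _ _ s C'a) => g [? []] //.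
Qed.

Lemma proper_extension_not_paraconsistent {L C : cons} :
  (forall G f, ~ L G f -> exists s, (forall g, G g -> L p_not_p (subst s g))
                              /\ L (set_add p_not_p (subst s f)) (Var 1)) ->
  is_logic C -> Defs.subrel L C -> ~ Defs.subrel C L -> ~ neg_paraconsistent C.
Proof.
move=> Lreduce [_ [Cmon [Ccut Cstr]]] LC nCL [f0 [g0]]; apply.
have [G [f [CGf nLGf]]] : exists G f, C G f /\ ~ L G f.
  apply: NNPP => nCL'; apply: nCL => G f CGf.
  by apply: NNPP => nLGf; apply: nCL'; exists G, f.
have [s [Lsg Lsf]] := Lreduce G f nLGf.
have Csf : C p_not_p (subst s f).
  apply: (Ccut _ (set_image s G)) => [_ [g [Gg ->]]|]; first exact/LC/Lsg.
  by apply: Cmon (Cstr _ _ s CGf) => g; right.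
have Cexplode : C p_not_p (Var 1).
  by apply: Ccut (LC _ _ Lsf) => _ ->.
pose r n := if n is 0 then f0 else g0.
by apply: Cmon (Cstr _ _ r Cexplode) => _ [_ [[->|->] ->]]; [left|right].
Qed.

Definition verum (A : form) : form := LImp A A.
Definition falsum (A : form) : form := Neg (verum A).
Definition oplus (A B : form) : form := LImp (Neg A) B.
Definition odot (A B : form) : form := Neg (oplus (Neg A) (Neg B)).
Definition ominus (A B : form) : form := odot A (Neg B).
Fixpoint nmul (n : nat) (A : form) : form :=
  if n is n'.+1 then oplus A (nmul n' A) else falsum A.

Definition sub_step (p : nat * nat) : nat * nat :=
  let: (a, b) := p in (if b < a then a - b else a, if a < b then b - a else b).

Lemma iter_sub_step_diag n a : iter n sub_step (a, a) = (a, a).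
Proof. by elim: n => //= n ->; rewrite /= ltnn. Qed.

Lemma iter_sub_step_gcd n a b : 0 < a -> 0 < b -> a + b <= n + 2 ->
  iter n sub_step (a, b) = (gcdn a b, gcdn a b).
Proof.
elim: n a b => [|n IH] a b a_gt0 b_gt0 ab_le.
  by have [-> ->] : a = 1 /\ b = 1 by lia.
rewrite iterSr /=; case: (ltngtP a b) => [ab|ba|<-].
- rewrite IH; [|lia|lia|lia].
  by rewrite -[in RHS](subnKC (ltnW ab)) gcdnDl.
- rewrite IH; [|lia|lia|lia].
  by rewrite -[in RHS](subnKC (ltnW ba)) [gcdn (b + _) _]gcdnC gcdnDl gcdnC.
- by rewrite iter_sub_step_diag gcdnn.
Qed.

Section Lukasiewicz.
Variables q i : nat.

Definition lval (v : nat -> 'I_q.+1) : form -> 'I_q.+1 :=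
  eval (@luk_neg q) (@luk_imp q) (@luk_impi q i) v.

Definition cond (X A B : form) : form :=
  oplus (odot (nmul q X) A) (odot (Neg (nmul q X)) B).

Definition euclid_step (p : form * form) : form * form :=
  let: (A, B) := p in
  (cond (ominus A B) (ominus A B) A, cond (ominus B A) (ominus B A) B).

Definition gcd_form (A : form) : form := (iter q.*2 euclid_step (A, verum A)).1.

Definition const_form (c : nat) (A : form) : form := nmul c (gcd_form A).

Lemma val_luk_impi (x y : 'I_q.+1) :
  luk_impi q i x y = maxn (if i <= x then 0 else q) y :> nat.
Proof.
by rewrite /luk_impi /luk_tilde inordK //; have := ltn_ord y; case: ifP; lia.
Qed.

Variable v : nat -> 'I_q.+1.
Implicit Types A B X : form.

Lemma lval_Var n : lval v (Var n) = v n.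
Proof. by []. Qed.

Lemma lval_le A : lval v A <= q.
Proof. by rewrite -ltnS ltn_ord. Qed.

Lemma lval_Neg A : lval v (Neg A) = q - lval v A :> nat.
Proof. by rewrite /lval /= /luk_neg inordK //; lia. Qed.

Lemma lval_LImp A B : lval v (LImp A B) = minn q (q - lval v A + lval v B) :> nat.
Proof. by rewrite /lval /= /luk_imp inordK //; lia. Qed.

Lemma lval_verum A : lval v (verum A) = q :> nat.
Proof. by rewrite lval_LImp; have := lval_le A; lia. Qed.

Lemma lval_falsum A : lval v (falsum A) = 0 :> nat.
Proof. by rewrite lval_Neg lval_verum subnn. Qed.

Lemma lval_oplus A B : lval v (oplus A B) = minn q (lval v A + lval v B) :> nat.
Proof. by rewrite lval_LImp lval_Neg; have := lval_le A; lia. Qed.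

Lemma lval_odot A B : lval v (odot A B) = lval v A + lval v B - q :> nat.
Proof.
rewrite lval_Neg lval_oplus !lval_Neg.
by have := lval_le A; have := lval_le B; lia.
Qed.

Lemma lval_ominus A B : lval v (ominus A B) = lval v A - lval v B :> nat.
Proof.
rewrite lval_odot lval_Neg.
by have := lval_le A; have := lval_le B; lia.
Qed.

Lemma lval_nmul n A : lval v (nmul n A) = minn q (n * lval v A) :> nat.
Proof.
elim: n => [|n IH] /=; first by rewrite lval_falsum mul0n minn0.
by rewrite lval_oplus IH mulSn; lia.
Qed.

Lemma lval_cond X A B :
  lval v (cond X A B) = (if 0 < lval v X then lval v A else lval v B) :> nat.
Proof.
have nmul_q : lval v (nmul q X) = (if 0 < lval v X then q else 0) :> nat.
  by rewrite lval_nmul; case: (lval v X : nat) => [|x]; rewrite ?muln0 /=; lia.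
rewrite lval_oplus !lval_odot lval_Neg nmul_q.
by have := lval_le A; have := lval_le B; case: ifP; lia.
Qed.

Lemma lval_iter_euclid_step n A B :
  let p := iter n euclid_step (A, B) in
  (lval v p.1 : nat, lval v p.2 : nat) =
    iter n sub_step (lval v A : nat, lval v B : nat).
Proof.
elim: n => [|n IH] //=; move: IH.
case: (iter n euclid_step (A, B)) => A' B' /= <- /=.
rewrite !lval_cond !lval_ominus !subn_gt0.
by congr pair; case: ifP; rewrite ?lval_ominus.
Qed.

Lemma lval_gcd_form A : 0 < lval v A ->
  lval v (gcd_form A) = gcdn (lval v A) q :> nat.
Proof.
move=> A_gt0; have := lval_iter_euclid_step q.*2 A (verum A); rewrite /gcd_form.
case: (iter _ euclid_step _) => A' B' /=.
rewrite lval_verum iter_sub_step_gcd; [by case| | |]; have := lval_le A; lia.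
Qed.

Lemma lval_const_form c A : prime q -> 0 < lval v A < q -> c <= q ->
  lval v (const_form c A) = c :> nat.
Proof.
move=> q_prime /andP[A_gt0 A_ltq] c_le.
have /eqP coprime_Aq : coprime (lval v A) q.
  by rewrite coprime_sym prime_coprime // gtnNdvd.
by rewrite /const_form lval_nmul lval_gcd_form // coprime_Aq muln1; lia.
Qed.

End Lukasiewicz.

Lemma classical_pres_explosive li : classical_pres li p_not_p (Var 1).
Proof.
move=> b bP; have := bP _ (or_introl erefl); have := bP _ (or_intror erefl).
by rewrite /=; case: (b 0).
Qed.

Section LukasiewiczLogic.
Variables q i : nat.
Hypotheses (q_prime : prime q) (i_gt0 : 0 < i) (i_le_half : i.*2 <= q).

Local Notation lv := (lval q i).

Lemma luk_filter_impi x y :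
  luk_filter q i (luk_impi q i x y) <-> (luk_filter q i x -> luk_filter q i y).
Proof.
rewrite /luk_filter val_luk_impi.
by case: ifP => _; split; try lia; move=> /(_ isT).
Qed.

Definition bool_val (b : bool) : 'I_q.+1 := if b then ord_max else ord0.

Lemma bool_val_neg : {morph bool_val : x / negb x >-> luk_neg q x}.
Proof. by move=> x; apply: val_inj; rewrite /= /luk_neg inordK; case: x => /=; lia. Qed.

Lemma bool_val_limp : {morph bool_val : x y / implb x y >-> luk_imp q x y}.
Proof.
move=> x y; apply: val_inj.
by rewrite /= /luk_imp inordK; case: x; case: y => /=; lia.
Qed.

Lemma bool_val_impi : {morph bool_val : x y / implb x y >-> luk_impi q i x y}.
Proof.
move=> x y; apply: val_inj; rewrite /= val_luk_impi.
have i_le : i <= q by lia.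
have i_nle0 : (i <= 0) = false by lia.
by case: x; case: y => /=; rewrite ?i_le ?i_nle0 ?maxn0 ?max0n ?maxnn.
Qed.

Lemma bool_val_designated b : luk_filter q i (bool_val b) <-> b = true.
Proof. by rewrite /luk_filter; case: b => /=; split; lia. Qed.

Lemma lval_bool_designated b f :
  luk_filter q i (lv (bool_val \o b) f) <-> eval negb implb implb b f = true.
Proof.
exact: designated_hom bool_val_neg bool_val_limp bool_val_impi bool_val_designated b f.
Qed.

Lemma Lqi_sub_classical : Defs.subrel (Lqi q i) (classical_pres implb).
Proof.
exact: matrix_cons_hom bool_val_neg bool_val_limp bool_val_impi bool_val_designated.
Qed.

Lemma Lqi_deduction_detachment : deduction_detachment (Lqi q i).
Proof. exact/matrix_cons_deduction_detachment/luk_filter_impi. Qed.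

Lemma Lqi_not_explosive : ~ Lqi q i p_not_p (Var 1).
Proof.
move=> /(_ (fun n => if n is 0 then inord i else ord0)).
rewrite /luk_filter /= => explode; suff : i <= 0 by lia.
by apply: explode => _ [->|->] /=; rewrite ?/luk_neg !inordK; lia.
Qed.

Lemma pair_designated_nonclassical v :
  (forall g, p_not_p g -> luk_filter q i (lv v g)) -> 0 < v 0 < q.
Proof.
move=> vP; have := vP _ (or_introl erefl); have := vP _ (or_intror erefl).
by rewrite /luk_filter lval_Neg lval_Var; have := ltn_ord (v 0); lia.
Qed.

Lemma lval_subst_const_form (v w : nat -> 'I_q.+1) n g : 0 < v n < q ->
  lv v (subst (fun m => const_form q (w m) (Var n)) g) = lv w g.
Proof.
move=> vn_nonclassical; rewrite /lval eval_subst; apply: eval_ext => m.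
apply: val_inj.
exact: (lval_const_form q i v (w m) (Var n) q_prime vn_nonclassical (leq_ord _)).
Qed.

Lemma instances_nontheorem_two_valued a v : ~ Lqi q i set_empty a ->
  (forall s, luk_filter q i (lv v (subst s a))) -> v =1 bool_val \o (fun n => 0 < v n).
Proof.
move=> /matrix_cons_countermodel [w [_ wa]] v_inst n; apply: val_inj => /=.
have [vn_nonclassical|] := boolP (0 < v n < q).
  have := v_inst (fun m => const_form q (w m) (Var n)).
  by rewrite lval_subst_const_form // => /wa.
by have := ltn_ord (v n); case: (ltnP 0 (v n)) => /=; lia.
Qed.

Lemma Lqi_maximal : maximal_wrt (Lqi q i) (classical_pres implb).
Proof.
split; [exact: Lqi_sub_classical | split].
  by move/(_ _ _ (classical_pres_explosive implb)); exact: Lqi_not_explosive.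
move=> a a_classical a_nthm G f; split.
  exact: (add_axiom_theorem_subrel (matrix_cons_is_logic _ _ _ _ _)
                                   Lqi_sub_classical a_classical G f).
move=> CGf v vGa; pose b n := 0 < v n.
have v_bool : v =1 bool_val \o b.
  by apply: instances_nontheorem_two_valued a_nthm _ => s; apply: vGa; right; exists s.
rewrite (eval_ext v_bool); apply/lval_bool_designated/CGf => g Gg.
by apply/lval_bool_designated; have := vGa g (or_introl Gg); rewrite (eval_ext v_bool).
Qed.

Lemma Lqi_reduce_to_pair G f : ~ Lqi q i G f ->
  exists s, (forall g, G g -> Lqi q i p_not_p (subst s g))
         /\ Lqi q i (set_add p_not_p (subst s f)) (Var 1).
Proof.
move=> /matrix_cons_countermodel [w [wG wf]].
exists (fun m => const_form q (w m) (Var 0)); split.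
  move=> g Gg v vP; rewrite -/(lv v _) lval_subst_const_form; first exact: wG.
  exact: pair_designated_nonclassical.
move=> v vPf; case: wf; have := vPf _ (or_intror erefl).
rewrite -/(lv v _) lval_subst_const_form //.
by apply: pair_designated_nonclassical => g Pg; apply: vPf; left.
Qed.

End LukasiewiczLogic.

Theorem proposition6p1 (q i : nat) :
  prime q -> 1 <= i -> i < q -> i.*2 <= q ->
  ideal_paraconsistent (Lqi q i).
Proof.
move=> q_prime i_gt0 _ i_le_half.
split; first exact: matrix_cons_is_logic.
split; first by exists (Var 0), (Var 1); exact: Lqi_not_explosive.
split; first exact: Lqi_deduction_detachment.
split; first by exists implb; split; [exact: Lqi_sub_classical | exact: Lqi_maximal].
move=> C C_logic LC nCL; apply: proper_extension_not_paraconsistent C_logic LC nCL.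
exact: Lqi_reduce_to_pair.
Qed.
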